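(* Let $\mathbf{C}$ be the Cantor set with a fixed compatible metric $\mathrm{dist}$, let $X \subset \mathbf{C}$, and let $f : X \to Y$ be a clopen-LC function from $X$ onto a separable metrizable space $Y$ such that $f^{-1}(y)$ is compact for every $y \in Y$. For $n = 1,2,\dots$, let $X_n$ be the union of all fibers $f^{-1}(y)$, $y \in Y$, for which there exist a sequence $y_k \to y$ in $Y$ with $y_k \neq y$ for all $k$ and $y_k \neq y_j$ for $k\ne j$, points $x_k \in f^{-1}(y_k)$, and a point $\tilde{x}_y \in \mathbf{C}$ with $x_k \to \tilde{x}_y$ and $\mathrm{dist}(\tilde{x}_y, f^{-1}(y)) > 1/n$; let $Y_n = f(X_n)$. Let $Y_0 = Y \setminus \bigcup_{n\ge 1} Y_n$ and $X_0 = f^{-1}(Y_0)$. Then $f|_{X_0} : X_0 \to Y_0$ is a closed function.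
   Context: All spaces are separable metrizable. A subset of a topological space is an LC-set if it is the intersection of an open set and a closed set. A function is closed if it maps closed sets to closed sets of its image space. A function $f : X \to Y$ is clopen-LC if for every subset $U \subset X$ that is clopen in $X$, the image $f(U)$ is an LC-set in $Y$. *)

From Stdlib Require Import Reals List.
Open Scope R_scope.

Definition is_metric {T : Type} (d : T -> T -> R) : Prop :=
  (forall x y, 0 <= d x y) /\
  (forall x y, d x y = 0 <-> x = y) /\
  (forall x y, d x y = d y x) /\
  (forall x y z, d x z <= d x y + d y z).

Definition m_open {T : Type} (d : T -> T -> R) (U : T -> Prop) : Prop :=
  forall x, U x -> exists r, 0 < r /\ forall z, d x z < r -> U z.

Definition m_closed {T : Type} (d : T -> T -> R) (C : T -> Prop) : Prop :=
  m_open d (fun x => ~ C x).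

Definition open_in {T : Type} (d : T -> T -> R) (S A : T -> Prop) : Prop :=
  (forall x, A x -> S x) /\
  exists V, m_open d V /\ forall x, A x <-> (V x /\ S x).

Definition closed_in {T : Type} (d : T -> T -> R) (S A : T -> Prop) : Prop :=
  (forall x, A x -> S x) /\
  exists C, m_closed d C /\ forall x, A x <-> (C x /\ S x).

Definition clopen_in {T : Type} (d : T -> T -> R) (S A : T -> Prop) : Prop :=
  open_in d S A /\ closed_in d S A.

Definition LC_set {T : Type} (d : T -> T -> R) (A : T -> Prop) : Prop :=
  exists O C, m_open d O /\ m_closed d C /\ forall x, A x <-> (O x /\ C x).

Definition image {T U : Type} (f : T -> U) (A : T -> Prop) : U -> Prop :=
  fun y => exists x, A x /\ f x = y.

Definition m_compact {T : Type} (d : T -> T -> R) (K : T -> Prop) : Prop :=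
  forall (I : Type) (U : I -> T -> Prop),
    (forall i, m_open d (U i)) ->
    (forall x, K x -> exists i, U i x) ->
    exists l : list I, forall x, K x -> exists i, In i l /\ U i x.

Definition separable {T : Type} (d : T -> T -> R) : Prop :=
  exists (D : T -> Prop) (e : T -> nat),
    (forall a b, D a -> D b -> e a = e b -> a = b) /\
    (forall x r, 0 < r -> exists z, D z /\ d x z < r).

Definition converges {T : Type} (d : T -> T -> R) (u : nat -> T) (l : T) : Prop :=
  forall eps, 0 < eps -> exists N, forall k, (N <= k)%nat -> d (u k) l < eps.

(** The Cantor set, as 2^N with the product topology *)
Definition Cantor := nat -> bool.

Definition product_open (U : Cantor -> Prop) : Prop :=
  forall x, U x -> exists n, forall z, (forall i, (i < n)%nat -> z i = x i) -> U z.

Definition compatible_metric (dist : Cantor -> Cantor -> R) : Prop :=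
  is_metric dist /\ forall U, m_open dist U <-> product_open U.

(** distance from a point to a set is > c  (inf over the set, literally unfolded:
    inf S > c  iff  some r > c is a lower bound of S) *)
Definition dist_set_gt {T : Type} (d : T -> T -> R) (p : T) (F : T -> Prop) (c : R) : Prop :=
  exists r, c < r /\ forall z, F z -> r <= d p z.

Definition fiber {T U : Type} (X : T -> Prop) (f : T -> U) (y : U) : T -> Prop :=
  fun x => X x /\ f x = y.

Definition bad_point {U : Type} (dist : Cantor -> Cantor -> R) (dY : U -> U -> R)
  (X : Cantor -> Prop) (f : Cantor -> U) (n : nat) (y : U) : Prop :=
  exists (yk : nat -> U) (xk : nat -> Cantor) (xt : Cantor),
    converges dY yk y /\
    (forall k, yk k <> y) /\
    (forall k j, k <> j -> yk k <> yk j) /\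
    (forall k, fiber X f (yk k) (xk k)) /\
    converges dist xk xt /\
    dist_set_gt dist xt (fiber X f y) (/ INR n).

Definition Xn {U : Type} dist (dY : U -> U -> R) X f (n : nat) : Cantor -> Prop :=
  fun x => exists y, bad_point dist dY X f n y /\ fiber X f y x.

Definition Yn {U : Type} dist (dY : U -> U -> R) X f (n : nat) : U -> Prop :=
  image f (Xn dist dY X f n).

Definition Y0 {U : Type} dist (dY : U -> U -> R) X f : U -> Prop :=
  fun y => ~ exists n, (1 <= n)%nat /\ Yn dist dY X f n y.

Definition X0 {U : Type} dist (dY : U -> U -> R) X f : Cantor -> Prop :=
  fun x => X x /\ Y0 dist dY X f (f x).

(* A point y of Y0 that is a limit of f(A) but not in f(A) is the limit of pairwise distinct
   values f(x_k), x_k in A; by compactness of the Cantor set we may assume x_k -> x.  If x were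
   outside the compact fibre f^{-1}(y), it would lie at positive distance > 1/n from it, so the
   fibre of y would belong to X_n and y to Y_n, contradicting y in Y0.  Hence f x = y, and x lies
   in A because A is closed in X0. *)
From Stdlib Require Import Reals List Lra Lia Classical ClassicalEpsilon.
Open Scope R_scope.

Lemma inv_INR_S_pos n : 0 < / INR (S n).
Proof. apply Rinv_0_lt_compat, lt_0_INR; lia. Qed.

Lemma inv_INR_S_le m n : (m <= n)%nat -> / INR (S n) <= / INR (S m).
Proof. intros h. apply Rinv_le_contravar; [apply lt_0_INR; lia | apply le_INR; lia]. Qed.

Lemma inv_INR_S_lt m n : (m < n)%nat -> / INR (S n) < / INR (S m).
Proof.
  intros h. apply Rinv_lt_contravar; [|apply lt_INR; lia].
  apply Rmult_lt_0_compat; apply lt_0_INR; lia.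
Qed.

Lemma exists_inv_INR_S_lt r : 0 < r -> exists n, / INR (S n) < r.
Proof.
  intros hr. destruct (archimed_cor1 r hr) as [N [HN N_pos]].
  exists (N - 1)%nat. now replace (S (N - 1)) with N by lia.
Qed.

Lemma strictly_decreasing_injective (a : nat -> R) :
  (forall k, a (S k) < a k) -> forall k j, k <> j -> a k <> a j.
Proof.
  intros Ha.
  assert (Hlt : forall k j, (k < j)%nat -> a j < a k).
  { intros k j hkj. induction hkj; [apply Ha|]. specialize (Ha m). lra. }
  intros k j hkj. destruct (Nat.lt_total k j) as [h|[h|h]]; [| tauto |];
    specialize (Hlt _ _ h); lra.
Qed.

Lemma dependent_choice {A : Type} (P : nat -> A -> Prop) (Rel : nat -> A -> A -> Prop) (x0 : A) :
  P 0%nat x0 -> (forall n x, P n x -> exists y, P (S n) y /\ Rel n x y) ->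
  exists u : nat -> A, forall n, P n (u n) /\ Rel n (u n) (u (S n)).
Proof.
  intros H0 Hstep.
  destruct (choice (fun (nx : nat * A) y =>
              P (fst nx) (snd nx) -> P (S (fst nx)) y /\ Rel (fst nx) (snd nx) y))
    as [g Hg].
  { intros [n x]. destruct (classic (P n x)) as [h|h].
    - destruct (Hstep n x h) as [y Hy]. now exists y.
    - exists x. simpl. tauto. }
  set (u := fix u n := match n with 0%nat => x0 | S n => g (n, u n) end).
  assert (Pu : forall n, P n (u n)).
  { induction n; [exact H0|]. exact (proj1 (Hg (n, u n) IHn)). }
  exists u. intros n. split; [apply Pu|]. exact (proj2 (Hg (n, u n) (Pu n))).
Qed.

Lemma converges_of_dist_lt_inv {T : Type} (d : T -> T -> R) (u : nat -> T) (l : T) :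
  (forall k, d (u k) l < / INR (S k)) -> converges d u l.
Proof.
  intros Hu eps heps. destruct (exists_inv_INR_S_lt eps heps) as [N HN].
  exists N. intros k hk. specialize (Hu k). pose proof (inv_INR_S_le N k hk). lra.
Qed.

Section MetricSpace.

Context {T : Type} (d : T -> T -> R) (Hd : is_metric d).

Lemma metric_self x : d x x = 0.
Proof. destruct Hd as [_ [Hz _]]. now apply Hz. Qed.

Lemma metric_pos_of_neq x y : x <> y -> 0 < d x y.
Proof.
  destruct Hd as [Hpos [Hz _]]. intros hxy.
  destruct (Rle_lt_or_eq_dec 0 (d x y) (Hpos x y)) as [h|h]; auto.
  exfalso. apply hxy, Hz. now symmetry.
Qed.

Lemma m_open_ball x eps : m_open d (fun z => d x z < eps).
Proof.
  destruct Hd as [_ [_ [_ Htri]]].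
  intros z Hz. exists (eps - d x z). split; [lra|].
  intros w Hw. pose proof (Htri x z w). lra.
Qed.

Lemma m_open_far p c : m_open d (fun z => c < d z p).
Proof.
  destruct Hd as [_ [_ [_ Htri]]].
  intros z Hz. exists (d z p - c). split; [lra|].
  intros w Hw. pose proof (Htri z w p). lra.
Qed.

Lemma m_closed_closure (S : T -> Prop) :
  m_closed d (fun y => forall r, 0 < r -> exists z, S z /\ d y z < r).
Proof.
  destruct Hd as [_ [_ [_ Htri]]].
  intros y Hy. apply not_all_ex_not in Hy as [r Hr].
  apply imply_to_and in Hr as [hr Hr].
  exists (r / 2). split; [lra|]. intros y' Hy' Cy'.
  destruct (Cy' (r / 2)) as [z [Sz Hz]]; [lra|].
  apply Hr. exists z. split; auto. pose proof (Htri y y' z). lra.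
Qed.

Lemma limit_point_of_closure_nonmember (S : T -> Prop) y :
  (forall r, 0 < r -> exists z, S z /\ d y z < r) -> ~ S y ->
  forall r, 0 < r -> exists z, S z /\ 0 < d y z < r.
Proof.
  intros Hy nSy r hr. destruct (Hy r hr) as [z [Sz Hz]].
  exists z. repeat split; auto. apply metric_pos_of_neq. now intros <-.
Qed.

Lemma m_closed_limit (C : T -> Prop) (u : nat -> T) l :
  m_closed d C -> (forall k, C (u k)) -> converges d u l -> C l.
Proof.
  destruct Hd as [_ [_ [Hsym _]]].
  intros HC Cu Hul. apply NNPP. intros nCl.
  destruct (HC l nCl) as [r [hr Hr]]. destruct (Hul r hr) as [N HN].
  apply (Hr (u N)); [rewrite Hsym; now apply HN | apply Cu].
Qed.

Lemma compact_far_from_point (F : T -> Prop) p :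
  m_compact d F -> ~ F p -> exists n, forall z, F z -> / INR (S n) < d z p.
Proof.
  intros HF nFp.
  destruct (HF nat (fun n z => / INR (S n) < d z p)) as [l Hl].
  - intros n. apply m_open_far.
  - intros z Fz. apply exists_inv_INR_S_lt, metric_pos_of_neq. now intros <-.
  - exists (list_max l). intros z Fz. destruct (Hl z Fz) as [n [Hn Hz]].
    eapply Rle_lt_trans; [|exact Hz]. apply inv_INR_S_le.
    pose proof (proj1 (list_max_le l (list_max l)) (le_n _)) as Hmax.
    rewrite Forall_forall in Hmax. auto.
Qed.

End MetricSpace.

Definition agree (n : nat) (x p : Cantor) : Prop := forall i, (i < n)%nat -> x i = p i.

Definition upd (p : Cantor) (n : nat) (b : bool) : Cantor :=
  fun i => if Nat.eqb i n then b else p i.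

Lemma agree_upd n p b : agree n (upd p n b) p.
Proof. intros i hi. unfold upd. now replace (Nat.eqb i n) with false by (symmetry; apply Nat.eqb_neq; lia). Qed.

Lemma converges_of_agree dist (u : nat -> Cantor) p :
  compatible_metric dist -> (forall k, agree k (u k) p) -> converges dist u p.
Proof.
  intros [Hm Hopen] Hu eps heps.
  destruct (proj1 (Hopen _) (m_open_ball dist Hm p eps) p) as [n Hn].
  { now rewrite metric_self. }
  exists n. intros k hk. destruct Hm as [_ [_ [Hsym _]]]. rewrite Hsym.
  apply Hn. intros i hi. apply Hu. lia.
Qed.

Section CantorCompactness.

Variable B : nat -> Cantor -> Prop.
Hypothesis B_antitone : forall m m' x, (m <= m')%nat -> B m' x -> B m x.

Definition cylinder_meets_all (n : nat) (p : Cantor) : Prop :=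
  forall m, exists x, B m x /\ agree n x p.

(* If both one-bit extensions missed some B m, a large enough B m would miss the cylinder of p. *)
Lemma cylinder_meets_all_extend n p :
  cylinder_meets_all n p -> exists b, cylinder_meets_all (S n) (upd p n b).
Proof.
  intros Hp. apply NNPP. intros Hno.
  assert (Hmiss : forall b, exists m, forall x, B m x -> ~ agree (S n) x (upd p n b)).
  { intros b. apply NNPP. intros Hb. apply Hno. exists b. intros m.
    apply NNPP. intros Hm. apply Hb. exists m. intros x Bx Ax. apply Hm. now exists x. }
  destruct (Hmiss false) as [m0 H0], (Hmiss true) as [m1 H1].
  destruct (Hp (Nat.max m0 m1)) as [x [Bx Ax]].
  assert (Axb : agree (S n) x (upd p n (x n))).
  { intros i hi. unfold upd. destruct (Nat.eqb_spec i n); [now subst | apply Ax; lia]. }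
  destruct (x n) eqn:Exn.
  - apply (H1 x); [apply (B_antitone _ (Nat.max m0 m1)); [lia|exact Bx] | exact Axb].
  - apply (H0 x); [apply (B_antitone _ (Nat.max m0 m1)); [lia|exact Bx] | exact Axb].
Qed.

Lemma cantor_adherent :
  (forall m, exists x, B m x) -> exists p, forall n, cylinder_meets_all n p.
Proof.
  intros Hne.
  destruct (dependent_choice cylinder_meets_all (fun n p q => agree n q p) (fun _ => false))
    as [u Hu].
  - intros m. destruct (Hne m) as [x Bx]. exists x. split; [exact Bx|]. intros i hi; lia.
  - intros n p Hp. destruct (cylinder_meets_all_extend n p Hp) as [b Hb].
    exists (upd p n b). split; [exact Hb | apply agree_upd].
  - assert (Hstable : forall n i, (i < n)%nat -> u n i = u (S i) i).
    { induction n; intros i hi; [lia|].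
      destruct (Nat.eq_dec i n) as [->|hin]; [reflexivity|].
      rewrite (proj2 (Hu n) i) by lia. apply IHn. lia. }
    exists (fun i => u (S i) i). intros n m.
    destruct (proj1 (Hu n) m) as [x [Bx Ax]]. exists x. split; [exact Bx|].
    intros i hi. rewrite Ax by exact hi. now apply Hstable.
Qed.

End CantorCompactness.

Lemma cantor_infimum_sequence (T : Cantor -> Prop) (w : Cantor -> R) :
  (forall r, 0 < r -> exists x, T x /\ 0 < w x < r) ->
  exists (u : nat -> Cantor) (p : Cantor),
    (forall k, T (u k) /\ 0 < w (u k) < / INR (S k) /\ agree k (u k) p) /\
    (forall k, w (u (S k)) < w (u k)).
Proof.
  intros Hinf.
  set (B := fun m x => T x /\ 0 < w x < / INR (S m)).
  destruct (cantor_adherent B) as [p Hp].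
  { intros m m' x hm [Tx Hx]. pose proof (inv_INR_S_le m m' hm). split; [exact Tx | lra]. }
  { intros m. exact (Hinf _ (inv_INR_S_pos m)). }
  destruct (Hp 0%nat 0%nat) as [x0 [Bx0 _]].
  destruct (dependent_choice (fun k x => B k x /\ agree k x p) (fun _ x y => w y < w x) x0)
    as [u Hu].
  - split; [exact Bx0 | intros i hi; lia].
  - intros k x [[Tx Hx] _].
    destruct (exists_inv_INR_S_lt (w x) (proj1 Hx)) as [m Hm].
    destruct (Hp (S k) (Nat.max m (S k))) as [y [[Ty Hy] Ay]].
    pose proof (inv_INR_S_le m (Nat.max m (S k)) (Nat.le_max_l _ _)).
    pose proof (inv_INR_S_le (S k) (Nat.max m (S k)) (Nat.le_max_r _ _)).
    exists y. repeat split; auto; lra.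
  - exists u, p. split; intros k; [|apply Hu].
    destruct (Hu k) as [[[Tu Hw] Au] _]. auto.
Qed.

Lemma Y0_limit_in_fiber (dist : Cantor -> Cantor -> R) (Hdist : is_metric dist)
  (X : Cantor -> Prop) (Y : Type) (dY : Y -> Y -> R) (f : Cantor -> Y) (y : Y)
  (yk : nat -> Y) (xk : nat -> Cantor) (xt : Cantor) :
  Y0 dist dY X f y -> (exists x, fiber X f y x) -> m_compact dist (fiber X f y) ->
  converges dY yk y -> (forall k, yk k <> y) -> (forall k j, k <> j -> yk k <> yk j) ->
  (forall k, fiber X f (yk k) (xk k)) -> converges dist xk xt ->
  fiber X f y xt.
Proof.
  intros Y0y [x Fx] Hcomp Hyk yk_ne yk_inj Fxk Hxk. apply NNPP. intros nFxt.
  destruct (compact_far_from_point dist Hdist _ _ Hcomp nFxt) as [n Hn].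
  apply Y0y. exists (S (S n)). split; [lia|].
  exists x. split; [|apply Fx]. exists y. split; [|exact Fx].
  exists yk, xk, xt. do 5 (split; [assumption|]).
  exists (/ INR (S n)). split; [apply inv_INR_S_lt; lia|].
  intros z Fz. destruct Hdist as [_ [_ [Hsym _]]]. rewrite Hsym. left. now apply Hn.
Qed.

Theorem lemma2 (dist : Cantor -> Cantor -> R) (Hdist : compatible_metric dist)
  (X : Cantor -> Prop)
  (Y : Type) (dY : Y -> Y -> R) (HdY : is_metric dY) (Hsep : separable dY)
  (f : Cantor -> Y)
  (Hclopen_LC : forall U, clopen_in dist X U -> LC_set dY (image f U))
  (Honto : forall y, exists x, X x /\ f x = y)
  (Hfib : forall y, m_compact dist (fiber X f y)) :
  forall A, closed_in dist (X0 dist dY X f) A ->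
    closed_in dY (Y0 dist dY X f) (image f A).
Proof.
  intros A [HAX [C [HC HAC]]].
  split; [intros y [x [Ax <-]]; apply (HAX x Ax)|].
  exists (fun y => forall r, 0 < r -> exists z, image f A z /\ dY y z < r).
  split; [apply m_closed_closure, HdY|].
  intros y. split.
  { intros Ay. split; [|destruct Ay as [x [Ax <-]]; apply (HAX x Ax)].
    intros r hr. exists y. split; [exact Ay|]. now rewrite metric_self. }
  intros [Cy Y0y]. apply NNPP. intros nAy.
  destruct (cantor_infimum_sequence A (fun x => dY y (f x))) as [u [p [Hu Hdec]]].
  { intros r hr. destruct (limit_point_of_closure_nonmember dY HdY _ y Cy nAy r hr) as [z [[x [Ax <-]] Hz]].
    now exists x. }
  assert (Hup : converges dist u p) by (apply converges_of_agree; [exact Hdist | apply Hu]).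
  assert (Fp : fiber X f y p).
  { apply (Y0_limit_in_fiber dist (proj1 Hdist) X Y dY f y (fun k => f (u k)) u p); auto.
    - destruct (Honto y) as [x Fx]. now exists x.
    - apply converges_of_dist_lt_inv. intros k. destruct HdY as [_ [_ [Hsym _]]].
      rewrite Hsym. apply Hu.
    - intros k Eq. destruct (Hu k) as [_ [Hw _]]. rewrite Eq, metric_self in Hw by exact HdY. lra.
    - intros k j hkj Eq. apply (strictly_decreasing_injective _ Hdec k j hkj). simpl. now rewrite Eq.
    - intros k. split; [apply HAX, Hu | reflexivity]. }
  assert (Cp : C p) by (apply (m_closed_limit dist (proj1 Hdist) C u); auto;
                       intros k; apply HAC, Hu).
  apply nAy. exists p. split; [|apply Fp]. apply HAC. split; [exact Cp|].
  split; [apply Fp|]. now rewrite (proj2 Fp).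
Qed.
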